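(* Let $p$ be a prime number and let $1\to F\to H\to\bar H\to1$ be an exact sequence of finite groups such that $\bar H$ is abelian and generated by $r$ elements. Suppose that the $p$-Sylow subgroup $F_p$ of $F$ is normal in $F$ and $F_p\cong(\mathbb{Z}/p\mathbb{Z})^m$ for some non-negative integer $m$. Suppose further that $|F|\le B\cdot|F_p|^e$ for some positive constants $B$ and $e$, and that $F$ is generated by $F_p$ together with $s$ additional elements. Then $H$ contains a characteristic abelian subgroup of order coprime to $p$ and index at most $B^{r+s+1}\cdot|H_p|^{e(r+s+1)+r+1}$, where $H_p$ is a $p$-Sylow subgroup of $H$. *)

From mathcomp Require Export all_boot all_order all_fingroup all_solvable.
From Stdlib Require Export Reals.

(* Let Z := 'Z(H) and K := 'O_p^'(Z).  As Z is abelian, |Z : K| is the p-part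
   of |Z|, hence at most |H_p|.  The centre contains the centraliser of any
   generating set of H, e.g. of F_p, the s generators of F and lifts of the r
   generators of H/F.  Since H/F is abelian, each element has at most
   |H'| <= |F| conjugates, and |H : C_H(F_p)| <= |F| |F_p|^r: modulo
   F C_H(F_p) the abelian group H is generated by r elements, each acting on
   F_p = (Z/p)^m by a matrix whose powers, by Cayley-Hamilton, are polynomials
   of degree < m in it, so that its order is at most p^m.  Altogether
   |H : K| <= |F|^(r+s+1) |H_p|^(r+1), and |F| <= B |H_p|^e. *)

From mathcomp Require Import all_algebra mxrepresentation mxabelem zify.
(* Reals comes after the algebra library so that [%R] is [R_scope], as in the
   statement, and ssrnat after Reals so that [^] on nat is [expn], not [Nat.pow]. *)
From Stdlib Require Import Reals Lia.
Import ssrnat GroupScope GRing.Theory.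

Section MatrixPowers.
Local Open Scope ring_scope.

Lemma mx_unit_expr_eq1 {F : finFieldType} {n} (A : 'M[F]_n.+1) :
  A \is a GRing.unit -> exists2 k, (0 < k <= #|F| ^ n.+1)%N & A ^+ k = 1.
Proof.
move=> uA.
pose P := [set horner_mx A (rVpoly u) | u : 'rV[F]_n.+1].
have powA_P k : A ^+ k \in P.
  set q := 'X^k %% char_poly A; apply/imsetP; exists (poly_rV q) => //.
  have sz_q : (size q <= n.+1)%N.
    by rewrite -ltnS -(size_char_poly A) ltn_modp -size_poly_eq0 size_char_poly.
  have -> : A ^+ k = horner_mx A 'X^k by rewrite rmorphXn /= horner_mx_X.
  rewrite poly_rV_K // {1}(divp_eq 'X^k (char_poly A)) rmorphD rmorphM /=.
  by rewrite Cayley_Hamilton mulr0 add0r.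
have card_P : (#|P| <= #|F| ^ n.+1)%N.
  by rewrite /P (leq_trans (leq_imset_card _ _)) // card_mx mul1n.
pose f (i : 'I_(#|F| ^ n.+1).+1) := A ^+ i.
have /injectivePn[i [j neq_ij eq_f]] : ~~ injectiveb f.
  apply: contraL card_P => /injectiveP inj_f; rewrite -ltnNge.
  rewrite -[X in (X <= _)%N]card_ord -(card_codom inj_f) subset_leq_card //.
  by apply/subsetP=> _ /codomP[k ->]; apply: powA_P.
wlog lt_ij : i j neq_ij eq_f / (i < j)%N.
  move=> W; have [lt_ij | lt_ji | /val_inj eq_ij] := ltngtP i j.
  - exact: W lt_ij.
  - by apply: (W j i); rewrite // eq_sym.
  - by rewrite eq_ij eqxx in neq_ij.
exists (j - i)%N.
  rewrite subn_gt0 lt_ij /=.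
  by have := ltn_ord j; rewrite ltnS; apply: leq_trans (leq_subr i j).
apply: (mulIr (unitrX i uA)); rewrite mul1r -exprD (subnK (ltnW lt_ij)).
exact: esym eq_f.
Qed.

End MatrixPowers.

Lemma card_gen_abelian_leq (gT : finGroupType) (L : seq gT) n :
  abelian <<[set:: L]>> -> {in L, forall x, #[x] <= n} ->
  #|<<[set:: L]>>| <= n ^ size L.
Proof.
elim: L => [|x L IH] abL ordL; first by rewrite set_nil gen0 cards1.
have ordL' : {in L, forall y, #[y] <= n}.
  by move=> y Ly; apply: ordL; rewrite inE Ly orbT.
have join_xL : <<x |: [set:: L]>> = <[x]> <*> <<[set:: L]>>.
  by rewrite joing_idr /cycle joing_idl.
rewrite set_cons join_xL in abL *.
have abL' : abelian <<[set:: L]>> := abelianS (joing_subr _ _) abL.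
have cxL : <[x]> \subset 'C(<<[set:: L]>>).
  exact: subset_trans (joing_subl _ _) (subset_trans abL (centS (joing_subr _ _))).
rewrite cent_joinEl //= expnS.
apply: leq_trans (dvdn_leq _ (dvdn_cardMg _ _)) _; first by rewrite muln_gt0 !cardG_gt0.
by rewrite leq_mul ?IH // ordL ?mem_head.
Qed.

Section IndexBounds.

Context {gT : finGroupType}.
Implicit Types (G H F E P U V : {group gT}) (A : {set gT}) (L S : seq gT).

Lemma abelem_expg_cent {p E x} :
  p.-abelem E -> x \in 'N(E) -> exists2 k, 0 < k <= #|E| & x ^+ k \in 'C(E).
Proof.
move=> abelE nEx; have [-> | ntE] := eqVneq E 1%G.
  by exists 1%N; rewrite ?cards1 // cent1T inE.
pose rG := abelem_repr abelE ntE (subxx 'N(E)).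
have [k k_bound rGk1] := mx_unit_expr_eq1 _ (repr_mx_unitr rG nEx).
exists k; first by rewrite -(card_abelem_rV abelE ntE) card_mx mul1n.
have Nxk : x ^+ k \in 'N(E) by rewrite groupX.
suff : x ^+ k \in rker rG by rewrite rker_abelem => /setIP[].
by apply/rkerP; split; rewrite // repr_mxX.
Qed.

Lemma index_subg_leq U V G : U \subset G -> #|U : V| <= #|G : V|.
Proof. by move=> sUG; rewrite subset_leq_card ?imsetS. Qed.

Lemma index_setI_leq U V G :
  U \subset G -> #|G : U :&: V| <= #|G : U| * #|G : V|.
Proof.
move=> sUG; rewrite -(Lagrange_index sUG (subsetIl U V)) indexgI.
by rewrite leq_mul2l index_subg_leq ?orbT.
Qed.

Lemma index_cent1_leq_der1 G y : y \in G -> #|G : 'C_G[y]| <= #|G^`(1)|.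
Proof.
move=> Gy; rewrite index_cent1 -(card_imset _ (mulgI y^-1)).
apply/subset_leq_card/subsetP => _ /imsetP[_ /imsetP[z Gz ->] ->].
exact: mem_commg.
Qed.

Lemma index_centU_seq_leq {G} A {L} :
  {subset L <= G} ->
  #|G : 'C_G(A :|: [set:: L])| <= #|G : 'C_G(A)| * #|G^`(1)| ^ size L.
Proof.
elim: L => [|y L IH] sLG; first by rewrite set_nil setU0 muln1.
have Gy : y \in G by apply: sLG; rewrite mem_head.
have sL'G : {subset L <= G} by move=> z Lz; apply: sLG; rewrite inE Lz orbT.
rewrite set_cons setUCA centU setIIr cent_set1.
apply: leq_trans (index_setI_leq _ _ _ (subsetIl G 'C[y])) _.
by rewrite /= expnS mulnCA leq_mul ?index_cent1_leq_der1 ?IH.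
Qed.

Lemma quotient_gen_lift {H F} {X : seq (coset_of F)} :
  F <| H -> <<[set:: X]>> = H / F ->
  exists L, [/\ size L = size X, {subset L <= H} & H \subset <<F :|: [set:: L]>>].
Proof.
move=> nsFH genHF; have [_ nFH] := andP nsFH.
have sXHF : {subset X <= H / F} by move=> x Xx; rewrite -genHF mem_gen ?inE.
exists (map (fun x : coset_of F => repr x) X); split; first exact: size_map.
  move=> _ /mapP[x Xx ->]; rewrite -(quotientGK nsFH).
  by apply: mem_morphpre; rewrite ?repr_coset_norm //= coset_reprK sXHF.
set L := map _ X.
have sF_gen : F \subset <<F :|: [set:: L]>> by rewrite sub_gen ?subsetUl.
rewrite -(quotientSGK nFH sF_gen) -genHF gen_subG.
apply/subsetP=> x; rewrite inE => Xx; rewrite -(coset_reprK x) mem_quotient //.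
by rewrite mem_gen // !inE (map_f (fun y : coset_of F => repr y)) ?orbT.
Qed.

Lemma index_cent_abelem_leq {p H F E L} :
  F <| H -> abelian (H / F) -> p.-abelem E -> H \subset 'N(E) ->
  {subset L <= H} -> H \subset <<F :|: [set:: L]>> ->
  #|H : 'C_H(E)| <= #|F| * #|E| ^ size L.
Proof.
move=> nsFH abHF abelE nEH sLH sH_FL; have [sFH nFH] := andP nsFH.
set C := 'C_H(E).
have nCH : H \subset 'N(C) by rewrite normsI ?normG ?norms_cent.
pose D := (C <*> F)%G.
have sCD : C \subset D := joing_subl _ _.
have sFD : F \subset D := joing_subr _ _.
have sDH : D \subset H by rewrite join_subG subsetIl.
have nDH : H \subset 'N(D) by rewrite normsY.
rewrite -(Lagrange_index sDH sCD) mulnC leq_mul //.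
  rewrite /= norm_joinEr ?(subset_trans sFH) // indexMg.
  exact: dvdn_leq (cardG_gt0 F) (dvdn_indexg F C).
have abHD : abelian (H / D).
  exact: sub_der1_abelian (subset_trans (der1_min nFH abHF) sFD).
have sLN : F :|: [set:: L] \subset 'N(D).
  rewrite subUset (subset_trans sFH nDH) /=.
  by apply/subsetP=> y; rewrite inE => /sLH; apply: (subsetP nDH).
have sHD_L : H / D \subset <<[set:: map (coset D) L]>>.
  apply: subset_trans (quotientS D sH_FL) _; rewrite quotient_gen // gen_subG.
  apply/subsetP=> _ /morphimP[y Ny /setUP[Fy | Ly] ->] /=.
    by rewrite coset_id ?group1 ?(subsetP sFD).
  by rewrite inE in Ly; rewrite mem_gen // inE map_f.
have sL_HD : <<[set:: map (coset D) L]>> \subset H / D.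
  by rewrite gen_subG; apply/subsetP=> _ /[!inE] /mapP[y /sLH Hy ->]; apply: mem_quotient.
rewrite -card_quotient // (leq_trans (subset_leq_card sHD_L)) //.
rewrite -(size_map (coset D)) card_gen_abelian_leq ?(abelianS sL_HD) //.
move=> _ /mapP[y /sLH Hy ->].
have [k /andP[k_gt0 le_kE] cEyk] := abelem_expg_cent abelE (subsetP nEH y Hy).
apply: leq_trans le_kE; apply: dvdn_leq k_gt0 _.
rewrite order_dvdn -morphX ?(subsetP nDH) //; apply/eqP/coset_id/(subsetP sCD).
by rewrite inE groupX.
Qed.

Lemma index_center_leq {p H F E S L} :
  F <| H -> abelian (H / F) -> p.-abelem E -> H \subset 'N(E) ->
  {subset S <= F} -> F \subset <<E :|: [set:: S]>> ->
  {subset L <= H} -> H \subset <<F :|: [set:: L]>> ->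
  #|H : 'Z(H)| <= #|F| ^ (size L + size S + 1) * #|E| ^ size L.
Proof.
move=> nsFH abHF abelE nEH sSF sF_ES sLH sH_FL; have [sFH nFH] := andP nsFH.
have sSH : {subset S <= H} by move=> y /sSF; apply: (subsetP sFH).
have sH_ESL : H \subset <<E :|: [set:: S] :|: [set:: L]>>.
  apply: subset_trans sH_FL _.
  rewrite gen_subG subUset (subset_trans sF_ES (genS (subsetUl _ _))) /=.
  exact: subset_trans (subsetUr _ _) (subset_gen _).
have sCZ : 'C_H(E :|: [set:: S] :|: [set:: L]) \subset 'Z(H).
  by rewrite setIS // -cent_gen centS.
have le_der_F n : #|H^`(1)| ^ n <= #|F| ^ n.
  by elim: n => // n IH; rewrite !expnS leq_mul // subset_leq_card ?der1_min.
apply: leq_trans (dvdn_leq (indexg_gt0 _ _) (indexgS H sCZ)) _.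
apply: leq_trans (index_centU_seq_leq _ sLH) _.
apply: leq_trans (leq_mul (index_centU_seq_leq _ sSH) (le_der_F _)) _.
apply: leq_trans (leq_mul (leq_mul (index_cent_abelem_leq nsFH abHF abelE nEH sLH sH_FL)
  (le_der_F _)) (leqnn _)) _.
rewrite !expnD expn1; nia.
Qed.

Lemma pnat_dvdn_leq_Sylow {p H P n} :
  p.-Sylow(H) P -> p.-nat n -> n %| #|H| -> n <= #|P|.
Proof.
move=> sylP p_n n_dvd_H; rewrite (card_Hall sylP) dvdn_leq ?part_gt0 //.
by rewrite -(part_pnat_id p_n) partn_dvd.
Qed.

Lemma index_pcore_leq_Sylow p {G H P} :
  nilpotent G -> G \subset H -> p.-Sylow(H) P -> #|G : 'O_p^'(G)| <= #|P|.
Proof.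
move=> nilG sGH sylP; apply: pnat_dvdn_leq_Sylow sylP _ _.
  by have /and3P[_ _] := nilpotent_pcore_Hall p^' nilG; rewrite pnatNK.
exact: dvdn_trans (dvdn_indexg _ _) (cardSg sGH).
Qed.

Lemma index_pcore_center_leq {p H F E S L P} :
  F <| H -> abelian (H / F) -> p.-abelem E -> E \subset H -> H \subset 'N(E) ->
  {subset S <= F} -> F \subset <<E :|: [set:: S]>> ->
  {subset L <= H} -> H \subset <<F :|: [set:: L]>> -> p.-Sylow(H) P ->
  #|H : 'O_p^'('Z(H))| <= #|F| ^ (size L + size S + 1) * #|P| ^ (size L).+1.
Proof.
move=> nsFH abHF abelE sEH nEH sSF sF_ES sLH sH_FL sylP.
have le_EP : #|E| <= #|P|.
  by apply: pnat_dvdn_leq_Sylow sylP (abelem_pgroup abelE) (cardSg sEH).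
rewrite -(Lagrange_index (center_sub H) (pcore_sub _ _)) expnSr mulnA leq_mul //.
  rewrite (leq_trans (index_center_leq nsFH abHF abelE nEH sSF sF_ES sLH sH_FL)) //.
  by rewrite leq_mul //; case: (size L) => // n; rewrite leq_exp2r.
exact: index_pcore_leq_Sylow (abelian_nil (center_abelian H)) (center_sub H) sylP.
Qed.

End IndexBounds.

Lemma INR_expn a n : INR (a ^ n) = (INR a ^ n)%R.
Proof. by elim: n => // n IH; rewrite expnS /= mult_INR IH. Qed.

Lemma INR_expn_leq_Rpower (a h n k : nat) (B e : R) :
  0 < h -> (INR a <= B * Rpower (INR h) e)%R ->
  (INR (a ^ n * h ^ k) <= B ^ n * Rpower (INR h) (e * INR n + INR k))%R.
Proof.
move=> h_gt0 le_a_Bhe; have h_pos : (0 < INR h)%R by apply/lt_0_INR/ltP.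
rewrite mult_INR !INR_expn Rpower_plus Rpower_pow // -Rmult_assoc.
apply: Rmult_le_compat_r; first exact/pow_le/Rlt_le.
rewrite -Rpower_mult Rpower_pow; last exact: exp_pos.
by rewrite -Rpow_mult_distr; apply: pow_incr; split; [apply: pos_INR | ].
Qed.

Theorem lemma2p12 (gT : finGroupType) (p r s : nat) (B e : R)
  (H F Fp : {group gT}) :
  prime p ->
  F <| H ->
  abelian (H / F) ->
  (exists X : seq (coset_of F), size X = r /\ <<[set:: X]>> = H / F) ->
  p.-Sylow(F) Fp -> Fp <| F -> p.-abelem Fp ->
  (0 < B)%R -> (0 < e)%R ->
  (INR #|F| <= B * Rpower (INR #|Fp|) e)%R ->
  (exists S : seq gT, size S = s /\ << (Fp :|: [set:: S]) >> = F) ->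
  forall Hp : {group gT}, p.-Sylow(H) Hp ->
  exists K : {group gT},
    [/\ K \char H, abelian K, coprime #|K| p &
      (INR #|H : K| <=
         B ^ (r + s + 1) *
         Rpower (INR #|Hp|) (e * INR (r + s + 1) + INR r + 1))%R].
Proof.
move=> p_pr nsFH abHF [X [<- genHF]] sylFp nsFpF abelFp B_gt0 e_gt0 leF_BFp
  [S [<- genF]] Hp sylHp.
have [L [<- sLH sH_FL]] := quotient_gen_lift nsFH genHF.
have sSF : {subset S <= F} by move=> y Sy; rewrite -genF mem_gen // !inE Sy orbT.
have sF_gen : F \subset <<Fp :|: [set:: S]>> by rewrite genF.
have [sFH sFpF] := (normal_sub nsFH, pHall_sub sylFp).
have nFpH : H \subset 'N(Fp).
  have charFp : Fp \char F by rewrite -(normal_Hall_pcore sylFp nsFpF) pcore_char.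
  exact: normal_norm (char_normal_trans charFp nsFH).
have sFpH := subset_trans sFpF sFH.
have leK := index_pcore_center_leq nsFH abHF abelFp sFpH nFpH sSF sF_gen sLH sH_FL sylHp.
exists 'O_p^'('Z(H))%G; split.
- exact: char_trans (pcore_char _ _) (center_char _).
- exact: abelianS (pcore_sub _ _) (center_abelian _).
- by rewrite (pnat_coprime (pcore_pgroup _ _)) // pnatNK pnat_id.
have leF_BHp : (INR #|F| <= B * Rpower (INR #|Hp|) e)%R.
  apply: Rle_trans leF_BFp _; apply: Rmult_le_compat_l; first exact: Rlt_le.
  apply: Rle_Rpower_l; first exact: Rlt_le.
  have leFpHp := pnat_dvdn_leq_Sylow sylHp (pHall_pgroup sylFp) (cardSg sFpH).
  by split; [apply/lt_0_INR/ltP | apply/le_INR/leP].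
apply: Rle_trans (le_INR _ _ (elimT leP leK)) _.
rewrite Rplus_assoc -S_INR; exact: INR_expn_leq_Rpower.
Qed.
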